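(* Let $(\mathcal X,d)$ be a finite distance space and $\mathcal C=\{C_1,\ldots,C_k\}$ any clustering of $\mathcal X$ with cores $C_1^o,\ldots,C_k^o$, and let $\beta=\min_i|C_i^o|/|\mathcal X|$. Fix an integer $\ell$ with $k\le\ell\le|\mathcal X|$. Then for any ordering of $\mathcal X$, with probability at least $1-ke^{-\beta\ell}$ (over the internal randomness of Algorithm subsample), the final set $T$ produced by Algorithm subsample with parameter $\ell$ induces (when listed in any order) a clustering of $\mathcal X$ that is a refinement of $\mathcal C$.
   Context: A distance space $(\mathcal X,d)$ is a set with a symmetric function $d:\mathcal X\times\mathcal X\to\mathbb R_{\ge0}$ with $d(x,x)=0$. A clustering of $\mathcal X$ is a set of nonempty, pairwise disjoint subsets whose union is $\mathcal X$. The core of cluster $C_i$ is the maximal subset $C_i^o\subset C_i$ such that $d(x,z)<d(x,y)$ for all $x\in C_i$, $z\in C_i^o$, $y\notin C_i$. A list $T=(t_1,\ldots,t_m)$ induces the clustering of $\mathcal X$ assigning each $x$ to the index $i$ minimizing $d(x,t_i)$ (ties by smallest $i$), empty clusters discarded. $\mathcal C$ is a refinement of $\mathcal C'$ if $x\sim_{\mathcal C}y$ implies $x\sim_{\mathcal C'}y$, where $x\sim_{\mathcal C}y$ means $x,y$ lie in the same cluster of $\mathcal C$. Algorithm subsample with parameter $\ell$, on input sequence $x_1,\ldots,x_N$: set $T=\{x_1,\ldots,x_\ell\}$; for $t=\ell+1,\ldots,N$: receive $x_t$, and with probability $\ell/t$ (independently) remove an element of $T$ chosen uniformly at random and add $x_t$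 to $T$. Output the final $T$. *)

From Stdlib Require Import Reals ClassicalDescription.
From mathcomp Require Import all_boot.
Set Implicit Arguments. Unset Strict Implicit. Unset Printing Implicit Defensive.

Definition Rltb (a b : R) : bool := if Rlt_dec a b then true else false.
Definition Rleb (a b : R) : bool := if Rle_dec a b then true else false.

Section Defs.
Local Open Scope R_scope.
Variable T : finType.
Variable d : T -> T -> R.

Definition distance_space : Prop :=
  (forall x y, Rle 0 (d x y)) /\ (forall x y, d x y = d y x) /\ (forall x, d x x = R0).

(* core of a cluster C: the maximal subset C^o of C with
   d x z < d x y for all x in C, z in C^o, y not in C
   (= the set of all z in C satisfying the condition individually) *)
Definition core (C : {set T}) : {set T} :=
  [set z in C | [forall x in C, forall y in ~: C, Rltb (d x z) (d x y)]].

(* index of the center assigned to x by the list ts: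
   the first index i minimizing d x (ts_i) *)
Definition assign (ts : seq T) (x : T) : nat :=
  find (fun t => all (fun u => Rleb (d x t) (d x u)) ts) ts.

Definition induced_refines (ts : seq T) (P : {set {set T}}) : Prop :=
  forall x y : T, assign ts x = assign ts y ->
    exists2 C, C \in P & (x \in C) && (y \in C).

(* finite distributions over outputs: weighted list *)
Definition dist := seq (R * {set T}).

(* one step of Algorithm subsample at time t, receiving x:
   with probability l/t remove a uniformly random element of S and add x *)
Definition sub_step (l t : nat) (x : T) (D : dist) : dist :=
  let q := (INR l / INR t)%R in
  flatten (map (fun pS : R * {set T} =>
     let (p, S) := pS in
     (p * (1 - q), S) ::
       map (fun y => (p * q / INR #|S|, x |: (S :\ y))) (enum S)) D).

Fixpoint sub_run (l t : nat) (D : dist) (rest : seq T) : dist :=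
  match rest with
  | [::] => D
  | x :: r => sub_run l t.+1 (sub_step l t.+1 x D) r
  end.

Definition subsample (l : nat) (xs : seq T) : dist :=
  sub_run l l [:: (R1, [set x in take l xs])] (drop l xs).

Definition prob (D : dist) (E : {set T} -> Prop) : R :=
  foldr (fun pS acc => (if excluded_middle_informative (E pS.2)
                        then pS.1 else R0) + acc) R0 D.

End Defs.

(* Reservoir sampling keeps the invariant that, after t >= l inputs, the current set is
   a uniformly random l-subset of those inputs: a new input enters with probability
   l/(t+1) and evicts a uniform member, and the weights 'C(t,l)^-1 (1 - l/(t+1)) and
   'C(t,l)^-1 (l/(t+1)) (t+1-l)/l both equal 'C(t+1,l)^-1.  So T is a uniform l-subset
   of X.  If T meets the core of every cluster C, the clustering it induces refines the
   given one: for x in C and z in T meeting the core of C, every center outside C is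
   strictly farther from x than z, so the nearest center of x lies in C.  A uniform
   l-subset misses a core of size m with probability
   'C(n-m,l)/'C(n,l) <= (1-m/n)^l <= exp(-m l/n) <= exp(-beta l), and a union bound
   over the k clusters concludes. *)

From Pilot Require Import Defs.
From Stdlib Require Import Reals ClassicalDescription.
From mathcomp Require Import all_boot all_order all_algebra.
From mathcomp Require Import Rstruct ring.
Set Implicit Arguments. Unset Strict Implicit. Unset Printing Implicit Defensive.
Import Order.TTheory GRing.Theory Num.Theory.
Local Open Scope ring_scope.

(* Rstruct exports its own [Rleb] and [Rltb], hence the qualified names. *)
Lemma Rleb_leP (a b : R) : reflect (a <= b) (Defs.Rleb a b).
Proof. by rewrite /Defs.Rleb; case: Rle_dec => h; constructor; [exact/RleP | move/RleP]. Qed.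

Lemma Rltb_ltP (a b : R) : reflect (a < b) (Defs.Rltb a b).
Proof. by rewrite /Defs.Rltb; case: Rlt_dec => h; constructor; [exact/RltP | move/RltP]. Qed.

Section NearestCenter.
Variables (T : finType) (d : T -> T -> R).

Lemma assign_nearest (ts : seq T) (x : T) : ts != [::] ->
  (assign d ts x < size ts)%N /\ {in ts, forall u, d x (nth x ts (assign d ts x)) <= d x u}.
Proof.
case: ts => // t0 ts _; set s := t0 :: ts.
set near := fun t => all (fun u => Defs.Rleb (d x t) (d x u)) s.
have has_near : has near s.
  have t0s : t0 \in s by rewrite inE eqxx.
  case: (@arg_minP _ _ _ t0 (mem s) (d x) t0s) => t ts_t tmin; apply/hasP; exists t => //.
  by apply/allP => u us; apply/Rleb_leP; apply: tmin.
split; first by rewrite /assign -has_find.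
by move=> u us; have /allP/(_ u us)/Rleb_leP := nth_find x has_near.
Qed.

Lemma assign_mem_cluster (C : {set T}) (ts : seq T) (x z : T) :
  x \in C -> z \in ts -> z \in core d C -> nth x ts (assign d ts x) \in C.
Proof.
move=> xC zts; rewrite inE => /andP [_ /forallP /(_ x)]; rewrite xC => /forallP zcore.
have ts_nil : ts != [::] by apply: contraTneq zts => ->.
have [_ /(_ z zts) near_le] := assign_nearest x ts_nil.
apply: contraT => near_out.
have := zcore (nth x ts (assign d ts x)); rewrite inE near_out => /Rltb_ltP.
by rewrite ltNge near_le.
Qed.

Lemma refines_of_hitting (P : {set {set T}}) (ts : seq T) :
  partition P [set: T] -> {in P, forall C, exists2 z, z \in ts & z \in core d C} ->
  induced_refines d ts P.
Proof.
move=> /and3P [/eqP covP trivP _] hit x y same.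
have blockP w : pblock P w \in P /\ w \in pblock P w.
  by rewrite pblock_mem ?mem_pblock covP inE.
have near_block w : nth w ts (assign d ts w) \in pblock P w.
  have [wP wB] := blockP w; have [z zts zcore] := hit _ wP.
  exact: assign_mem_cluster zts zcore.
have [[xP xB] [yP yB]] := (blockP x, blockP y).
have ts_nil : ts != [::] by have [z zts _] := hit _ xP; apply: contraTneq zts => ->.
have [y_lt _] := assign_nearest y ts_nil.
have near_y : nth x ts (assign d ts x) \in pblock P y.
  by rewrite same (set_nth_default y x y_lt) near_block.
exists (pblock P x) => //; rewrite xB.
by rewrite -(def_pblock trivP xP (near_block x)) (def_pblock trivP yP near_y).
Qed.

End NearestCenter.

Section Expectation.
Variable T : finType.
Implicit Types (D : Defs.dist T) (f : {set T} -> R).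

Definition Ex D f : R := \sum_(pS <- D) pS.1 * f pS.2.

Definition indicator (E : {set T} -> Prop) (S : {set T}) : R :=
  if excluded_middle_informative (E S) then 1 else 0.

Lemma prob_Ex D (E : {set T} -> Prop) : prob D E = Ex D (indicator E).
Proof.
elim: D => [|[p S] D IH]; first by rewrite /Ex big_nil.
rewrite /= IH /Ex big_cons RplusE /indicator.
by case: excluded_middle_informative => h /=; rewrite ?mulr1 ?mulr0 ?add0r.
Qed.

Lemma Ex_sub_step l t x D f :
  let q := l%:R / t%:R in
  Ex (sub_step l t x D) f =
  Ex D (fun S => (1 - q) * f S + q / #|S|%:R * \sum_(y in S) f (x |: S :\ y)).
Proof.
move=> q; rewrite /Ex /sub_step big_flatten big_map; apply: eq_bigr => -[p S] _ /=.
rewrite big_cons big_map big_enum /= !RdivE !INRE !RminusE !RmultE -/q.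
rewrite [RHS]mulrDr !mulrA [in RHS]mulr_sumr; congr (_ + _).
Qed.

End Expectation.

Section Draws.
Variables (T : finType) (l : nat).
Implicit Types (A U V : {set T}) (x y : T).

Definition draws A : {set {set T}} := [set U : {set T} | U \subset A & #|U| == l].

(* (U, y) |-> (x |: U :\ y, y) is a bijection from the pairs with U in draws A and
   y in U onto the pairs with V in draws (x |: A), x in V and y in A :\: V; its
   inverse is (V, y) |-> (y |: V :\ x, y). *)
Lemma exchange_drawsE A x y V : x \notin A ->
  [&& y |: V :\ x \in draws A, y \in y |: V :\ x & (x |: (y |: V :\ x) :\ y == V)] =
  [&& V \in draws (x |: A), x \in V & y \in A :\: V].
Proof.
move=> xA; rewrite !inE eqxx /=; set U := y |: V :\ x.
apply/idP/idP => [/andP [/andP [sUA /eqP cardU] /eqP eV] |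
                  /and4P [/andP [sVA /eqP cardV] xV yV yA]].
  have yA : y \in A by apply: (subsetP sUA); rewrite setU11.
  have xU : x \notin U :\ y by apply: contra xA => /setD1P [_ /(subsetP sUA)].
  rewrite -eV setU11 !inE eqxx (memPn xA) //= yA !andbT.
  rewrite setUS ?(subset_trans (subD1set _ _) sUA) //=.
  rewrite cardsU1 xU -cardU (cardsD1 y U) setU11 eqxx orbF /=.
  by apply: contraNneq xA => <-.
have yVx : y \notin V :\ x by rewrite !inE negb_and yV orbT.
rewrite /U setU1K // setD1K // eqxx andbT.
rewrite subUset sub1set yA cardsU1 yVx -cardV (cardsD1 x V) xV eqxx andbT /=.
by apply/subsetP => z /setD1P [zx /(subsetP sVA)]; rewrite in_setU1 (negbTE zx).
Qed.

Lemma sum_draws_exchange A x (h : {set T} -> R) : x \notin A ->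
  \sum_(U in draws A) \sum_(y in U) h (x |: U :\ y) =
  (#|A| - l.-1)%:R * \sum_(V in draws (x |: A) | x \in V) h V.
Proof.
move=> xA.
transitivity (\sum_(V in draws (x |: A) | x \in V) \sum_(y in A :\: V) h V); last first.
  rewrite mulr_sumr; apply: eq_bigr => V /andP [].
  rewrite inE => /andP [sVA /eqP cardV] xV; rewrite sumr_const mulr_natl cardsD.
  suff -> : A :&: V = V :\ x by rewrite -cardV (cardsD1 x V) xV.
  apply/setP => z; rewrite !inE; apply/andP/andP => [[zA zV] | [zx zV]]; split => //.
    by apply: contraNneq xA => <-.
  by move: (subsetP sVA z zV); rewrite in_setU1 (negbTE zx).
rewrite !pair_big_dep /=.
rewrite (reindex_onto (fun p => (p.2 |: p.1 :\ x, p.2)) (fun p => (x |: p.1 :\ p.2, p.2))) /=.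
  apply: eq_big => -[V y] /=; first by rewrite xpair_eqE eqxx andbT -andbA exchange_drawsE // andbA.
  by rewrite xpair_eqE eqxx andbT => /andP [_ /eqP ->].
move=> [U y] /= /andP [+ yU]; rewrite inE => /andP [sUA _]; congr (_, _).
have xU : x \notin U :\ y by apply: contra xA => /setD1P [_ /(subsetP sUA)].
by rewrite setU1K // setD1K.
Qed.

(* Uniformity of a weighted list is stated through expectations, since the list may
   repeat a set with several weights. *)
Definition uniform_on A (D : Defs.dist T) :=
  forall f, Ex D f = 'C(#|A|, l)%:R^-1 * \sum_(U in draws A) f U.

Lemma invr_bin_succ t : (0 < l)%N -> (l <= t)%N ->
  'C(t.+1, l)%:R^-1 = 'C(t, l)%:R^-1 * ((t.+1 - l)%:R / t.+1%:R) :> R.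
Proof.
move=> l_gt0 lt.
have binS_neq0 : 'C(t.+1, l)%:R != 0 :> R by rewrite pnatr_eq0 -lt0n bin_gt0 ltnW.
have bin_neq0 : 'C(t, l)%:R != 0 :> R by rewrite pnatr_eq0 -lt0n bin_gt0.
rewrite -[(t.+1 - l)%:R](mulfK binS_neq0) -natrM -mul_bin_down natrM /=.
by field; rewrite binS_neq0 bin_neq0 addrC natr1 pnatr_eq0.
Qed.


Lemma sub_step_uniform A x D : (0 < l)%N -> (l <= #|A|)%N -> x \notin A ->
  uniform_on A D -> uniform_on (x |: A) (sub_step l #|A|.+1 x D).
Proof.
move=> l_gt0 lA xA unifD f; rewrite Ex_sub_step unifD cardsU1 xA /=.
set t := #|A|; set q := l%:R / t.+1%:R.
have l_neq0 : l%:R != 0 :> R by rewrite pnatr_eq0 -lt0n.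
have draws_x : \sum_(V in draws (x |: A)) f V =
    \sum_(V in draws A) f V + \sum_(V in draws (x |: A) | x \in V) f V.
  rewrite (bigID (fun V => x \in V)) /= addrC; congr (_ + _); apply: eq_bigl => V.
  rewrite !inE andbAC; congr (_ && _).
  apply/andP/idP => [[/subsetP sVxA xV] | sVA]; last first.
    by rewrite (subset_trans sVA (subsetUr _ _)) (contraNN (subsetP sVA x) xA).
  apply/subsetP => z zV; move: (sVxA z zV); rewrite in_setU1.
  by case: eqP => // zx; rewrite -zx zV in xV.
rewrite (eq_bigr (fun U => (1 - q) * f U + q / l%:R * \sum_(y in U) f (x |: U :\ y))); last first.
  by move=> U; rewrite inE => /andP [_ /eqP ->].
have keep_coef : 1 - q = (t.+1 - l)%:R / t.+1%:R.
  by rewrite natrB ?(leqW lA) // /q; field; rewrite addrC natr1 pnatr_eq0.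
have swap_count : (t - l.-1)%N = (t.+1 - l)%N by rewrite -{2}(prednK l_gt0) subSS.
rewrite big_split /= -!mulr_sumr sum_draws_exchange // -/t swap_count draws_x.
rewrite (invr_bin_succ l_gt0 lA) keep_coef /q; field.
by rewrite addrC natr1 l_neq0 !pnatr_eq0 -!lt0n bin_gt0 lA.
Qed.

Lemma sub_run_uniform (r : seq T) A D : (0 < l)%N -> (l <= #|A|)%N -> uniq r ->
  {in r, forall x, x \notin A} -> uniform_on A D ->
  uniform_on (A :|: [set:: r]) (sub_run l #|A| D r).
Proof.
move=> l_gt0; elim: r A D => [|x r IH] A D lA ur rA unifD /=; first by rewrite set_nil setU0.
move: ur => /andP [xr ur]; have xA := rA x (mem_head x r).
have card_xA : #|x |: A| = #|A|.+1 by rewrite cardsU1 xA.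
rewrite set_cons setUCA setUA -card_xA; apply: IH => //.
- by rewrite card_xA leqW.
- move=> y yr; rewrite in_setU1 negb_or (rA y) ?inE ?yr ?orbT // andbT.
  by apply: contraNneq xr => <-.
- by rewrite card_xA; exact: sub_step_uniform.
Qed.

Lemma uniform_on_point A : #|A| = l -> uniform_on A [:: (R1, A)].
Proof.
move=> cardA f; have -> : draws A = [set A].
  apply/setP => U; rewrite !inE eqEcard cardA; case: (boolP (U \subset A)) => //= sUA.
  by rewrite eqn_leq -{1}cardA subset_leq_card.
by rewrite /Ex big_cons big_nil big_set1 cardA binn invr1 !mul1r addr0.
Qed.

Lemma subsample_uniform (xs : seq T) : (0 < l)%N -> (l <= #|T|)%N ->
  perm_eq xs (enum T) -> uniform_on [set: T] (subsample l xs).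
Proof.
move=> l_gt0 lT xsT.
have uxs : uniq xs by rewrite (perm_uniq xsT) enum_uniq.
set A0 := [set x in take l xs].
have card_A0 : #|A0| = l.
  by rewrite cardsE (card_uniqP (take_uniq l uxs)) size_takel // (perm_size xsT) -cardT.
have -> : [set: T] = A0 :|: [set:: drop l xs].
  by apply/setP => z; rewrite !inE -mem_cat cat_take_drop (perm_mem xsT) mem_enum.
have := @sub_run_uniform (drop l xs) A0 [:: (R1, A0)] l_gt0.
rewrite card_A0 /subsample; apply => //; last exact: uniform_on_point.
- by move: uxs; rewrite -{1}(cat_take_drop l xs) cat_uniq => /and3P [].
- move=> x xd; rewrite inE; move: uxs; rewrite -{1}(cat_take_drop l xs) cat_uniq => /and3P [_ + _].
  by apply: contra => xt; apply/hasP; exists x.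
Qed.

End Draws.

Lemma ffact_mul_expn_le a n k : (a <= n)%N -> (a ^_ k * n ^ k <= a ^ k * n ^_ k)%N.
Proof.
move=> an; elim: k => [|k IH]; first by rewrite !ffactn0 !expn0.
rewrite !ffactnSr !expnSr mulnACA [X in (_ <= X)%N]mulnACA leq_mul //.
by rewrite mulnBl mulnBr leq_sub2l // [(a * k)%N]mulnC leq_mul2l an orbT.
Qed.

Lemma bin_mul_expn_le m n k : (m <= n)%N -> ('C(m, k) * n ^ k <= m ^ k * 'C(n, k))%N.
Proof.
move=> mn; rewrite -(leq_pmul2r (fact_gt0 k)) mulnAC bin_ffact -mulnA bin_ffact.
exact: ffact_mul_expn_le.
Qed.

Lemma bin_ratio_le_exp n m k (a : R) : (0 < n)%N -> (m <= n)%N -> (k <= n)%N ->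
  a <= m%:R / n%:R -> 'C(n - m, k)%:R / 'C(n, k)%:R <= exp (- (a * k%:R)).
Proof.
move=> n_gt0 mn kn a_le.
have n_pos : 0 < n%:R :> R by rewrite ltr0n.
have bin_pos : 0 < 'C(n, k)%:R :> R by rewrite ltr0n bin_gt0.
have m_le : m%:R / n%:R <= 1 :> R by rewrite ler_pdivrMr // mul1r ler_nat.
rewrite RoppE RmultE.
have -> : - (a * k%:R) = - a *+ k by rewrite mulr_natr mulNrn.
rewrite -expRX; apply: (@le_trans _ _ ((1 - m%:R / n%:R) ^+ k)).
  have -> : 1 - m%:R / n%:R = (n - m)%:R / n%:R :> R by rewrite natrB // mulrBl divff ?gt_eqF.
  rewrite expr_div_n ler_pdivrMr // mulrAC ler_pdivlMr ?exprn_gt0 // -!natrX -!natrM ler_nat.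
  exact: bin_mul_expn_le (leq_subr m n).
apply: lerXn2r; rewrite ?nnegrE ?subr_ge0 //; first by apply/ltW/RltP; exact: exp_pos.
apply: le_trans (_ : 1 - a <= _); first by rewrite lerD2l lerN2.
by apply/RleP; exact: exp_ineq1_le.
Qed.

Section Refinement.
Variables (T : finType) (d : T -> T -> R) (P : {set {set T}}).
Hypothesis partP : partition P [set: T].

Definition refining_centers (S : {set T}) : Prop :=
  forall ts, perm_eq ts (enum S) -> induced_refines d ts P.

Lemma refining_centers_of_hitting (S : {set T}) :
  {in P, forall C, ~~ [disjoint S & core d C]} -> refining_centers S.
Proof.
move=> hit ts tsS; apply: refines_of_hitting partP _ => C CP.
have /set0Pn [z] : S :&: core d C != set0 by rewrite setI_eq0 hit.
by rewrite inE => /andP [zS zC]; exists z; rewrite // (perm_mem tsS) mem_enum.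
Qed.

Lemma indicator_refining_ge (S : {set T}) :
  1 - indicator refining_centers S <= \sum_(C in P) (if [disjoint S & core d C] then 1 else 0).
Proof.
rewrite /indicator; case: excluded_middle_informative => /= [_ | notE].
  by rewrite subrr sumr_ge0 // => C _; case: ifP.
have [C CP missC] : exists2 C, C \in P & [disjoint S & core d C].
  apply/exists_inP; apply: contraT => /exists_inPn hit.
  by case: notE; apply: refining_centers_of_hitting.
by rewrite (bigD1 C) //= missC subr0 lerDl sumr_ge0 // => C' _; case: ifP.
Qed.

Variable l : nat.
Hypotheses (l_gt0 : (0 < l)%N) (lT : (l <= #|T|)%N).

Lemma uniform_miss_le (K : {set T}) (a : R) : a <= #|K|%:R / #|T|%:R ->
  'C(#|T|, l)%:R^-1 * \sum_(U in draws l [set: T]) (if [disjoint U & K] then 1 else 0)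
  <= exp (- (a * l%:R)).
Proof.
move=> a_le; rewrite -big_mkcondr (eq_bigl (mem (draws l (~: K)))) => [|U]; last first.
  by rewrite !inE subsetT disjoints_subset andbC.
rewrite sumr_const /draws cards_draws cardsCs setCK mulrC.
apply: bin_ratio_le_exp => //; [exact: leq_trans lT | exact: max_card].
Qed.

Lemma uniform_refining_ge (a : R) : {in P, forall C, a <= #|core d C|%:R / #|T|%:R} ->
  1 - #|P|%:R * exp (- (a * l%:R)) <=
  'C(#|T|, l)%:R^-1 * \sum_(U in draws l [set: T]) indicator refining_centers U.
Proof.
move=> a_le; set c := 'C(#|T|, l)%:R^-1.
have mass1 : c * \sum_(U in draws l [set: T]) 1 = 1.
  by rewrite sumr_const /draws cards_draws cardsT mulVf // pnatr_eq0 -lt0n bin_gt0.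
have -> : c * \sum_(U in draws l [set: T]) indicator refining_centers U =
    1 - c * \sum_(U in draws l [set: T]) (1 - indicator refining_centers U).
  by rewrite sumrB mulrBr mass1 opprB addrC subrK.
rewrite lerD2l lerN2.
apply: (@le_trans _ _ (c * \sum_(U in draws l [set: T])
    \sum_(C in P) (if [disjoint U & core d C] then 1 else 0))).
  by rewrite ler_wpM2l ?invr_ge0 ?ler0n //; apply: ler_sum => U _; exact: indicator_refining_ge.
rewrite exchange_big mulr_sumr mulr_natl -sumr_const; apply: ler_sum => C CP.
exact: uniform_miss_le (a_le C CP).
Qed.

End Refinement.

Lemma geq_bigminn_cond (I : finType) (P : pred I) (F : I -> nat) x0 i :
  P i -> (\big[minn/x0]_(j | P j) F j <= F i)%N.
Proof. by move=> Pi; have := bigmin_le_cond x0 F Pi; rewrite minEnat. Qed.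

Theorem mainTheorem12 (T : finType) (d : T -> T -> R)
  (hd : distance_space d)
  (P : {set {set T}}) (hP : partition P [set: T])
  (l : nat) (hkl : (#|P| <= l)%N) (hlX : (l <= #|T|)%N)
  (xs : seq T) (hxs : perm_eq xs (enum T)) :
  let beta := Rdiv (INR (\big[minn/#|T|]_(C in P) #|core d C|)) (INR #|T|) in
  Rle (Rminus R1 (Rmult (INR #|P|) (exp (Ropp (Rmult beta (INR l))))))
      (prob (subsample l xs)
        (fun S => forall ts : seq T, perm_eq ts (enum S) -> induced_refines d ts P)).
Proof.
move=> beta; have [l0 | l_gt0] := posnP l.
  have P0 : P = set0 by apply/eqP; rewrite -cards_eq0 -leqn0 -l0.
  have T0 (x : T) : False.
    by move: hP => /and3P [/eqP covP _ _]; have := in_setT x; rewrite -covP P0 /cover big_set0 inE.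
  have -> : xs = [::] by case: xs hxs => // x _ _; case: (T0 x).
  rewrite /prob /subsample /=; case: excluded_middle_informative => /= [_ | []]; last first.
    by move=> ts _ x; case: (T0 x).
  by apply/RleP; rewrite P0 cards0 RminusE RmultE RplusE /= mul0r subr0 addr0.
rewrite prob_Ex (subsample_uniform l_gt0 hlX hxs) RminusE RmultE !INRE.
rewrite cardsT; apply/RleP; apply: uniform_refining_ge => // C CP.
rewrite /beta RdivE !INRE ler_pM2r ?invr_gt0 ?ltr0n ?ler_nat; last exact: leq_trans hlX.
exact: geq_bigminn_cond.
Qed.
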